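(* Let $\mathcal{P}$ be an arbitrary set of primes all smaller than $\log x$, and let $S(x, \mathcal{P})$ be the number of positive integers $n \le x$ not divisible by any prime in $\mathcal{P}$. Then $$S(x,\mathcal{P}) \le (1+o(1)) \, x \exp\Big(-\sum_{p \in \mathcal{P}} \frac1p\Big)$$ as $x \to \infty$.
   Context: $\log$ is the natural logarithm. *)

From HB Require Import structures.
From mathcomp Require Import all_boot all_order all_algebra.
From mathcomp Require Import all_classical all_reals all_analysis.
Set Implicit Arguments. Unset Strict Implicit. Unset Printing Implicit Defensive.
Import Order.TTheory GRing.Theory Num.Theory.
Local Open Scope ring_scope.

(* S(x, P) = #{ n : 1 <= n <= x, no p in P divides n }.
   The (necessarily finite) set P is given as a duplicate-free list. *)
Definition S_count (R : realType) (x : R) (P : seq nat) : nat :=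
  count (fun n : nat => all (fun p : nat => ~~ (p %| n)%N) P) (iota 1 (Num.truncn x)).

(** Legendre's sieve counts the integers [n <= N] free of the primes of [P]
    with error at most [2^|P|], against the main term [N * prod (1 - 1/p)],
    and [prod (1 - 1/p) <= exp (- sum 1/p)].  Since every [p] in [P] is below
    [log x], the list [P] has at most [log x + 1] elements, and [sum 1/p] is at
    most [|P|/5 + 3/5]; hence [2^|P| * exp (sum 1/p)] is [O(x^0.95)], which is
    [o(x)]. *)
From HB Require Import structures.
From mathcomp Require Import all_boot all_order all_algebra.
From mathcomp Require Import all_classical all_reals all_analysis.
From mathcomp Require Import zify ring lra.
Set Implicit Arguments. Unset Strict Implicit. Unset Printing Implicit Defensive.
Import Order.TTheory GRing.Theory Num.Theory.
Local Open Scope ring_scope.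

Definition coprime_to_all (P : seq nat) (n : nat) : bool :=
  all (fun p : nat => ~~ (p %| n)%N) P.

Definition sieve_count (N : nat) (P : seq nat) : nat :=
  count (coprime_to_all P) (iota 1 N).

Lemma S_countE (R : realType) (x : R) P :
  S_count x P = sieve_count (Num.truncn x) P.
Proof. by []. Qed.

Lemma coprime_to_all_mul p P m : prime p -> p \notin P -> all prime P ->
  coprime_to_all P (p * m) = coprime_to_all P m.
Proof.
move=> p_pr pNP /allP P_pr; apply: eq_in_all => q qP /=.
rewrite Euclid_dvdM ?P_pr // (dvdn_prime2 (P_pr q qP) p_pr).
have /negbTE -> // : q != p.
by apply: contraNneq pNP => <-.
Qed.

Lemma count_iota1S (a : pred nat) N :
  count a (iota 1 N.+1) = (count a (iota 1 N) + a N.+1)%N.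
Proof. by rewrite -[N.+1]addn1 iotaD count_cat /= addn0 add1n addn1. Qed.

(* Legendre's recursion: the multiples of [p] below [N] are [p * m], [m <= N %/ p]. *)
Lemma sieve_count_cons N p P : prime p -> p \notin P -> all prime P ->
  sieve_count N P = (sieve_count N (p :: P) + sieve_count (N %/ p) P)%N.
Proof.
move=> p_pr pNP P_pr; rewrite /sieve_count.
elim: N => [|N IH]; first by rewrite div0n.
have p_gt0 := prime_gt0 p_pr.
rewrite !count_iota1S divnS // [coprime_to_all (p :: P) _]/=.
case: (boolP (p %| N.+1)%N) => pN; last by rewrite andTb add0n IH; lia.
rewrite andFb add1n count_iota1S.
have -> : N.+1 = (p * (N %/ p).+1)%N.
  by rewrite -{1}(divnK pN) divnS // pN mulnC.
by rewrite coprime_to_all_mul // IH; lia.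
Qed.

Section SieveError.
Variable R : realType.

Definition euler_factor (P : seq nat) : R := \prod_(p <- P) (1 - (p%:R)^-1).

Lemma prime_inv_itv p : prime p -> 0 <= (p%:R : R)^-1 <= 1.
Proof.
move=> p_pr; have p1 : 1 <= (p%:R : R) by rewrite ler1n prime_gt0.
by rewrite invr_ge0 invf_le1; lra.
Qed.

Lemma euler_factor_itv P : all prime P -> 0 <= euler_factor P <= 1.
Proof.
elim: P => [|p P IH] /=; first by rewrite /euler_factor big_nil ler01 lexx.
case/andP=> /prime_inv_itv/andP[i0 i1] /IH/andP[e0 e1].
by rewrite /euler_factor big_cons -/(euler_factor P); apply/andP; split; nra.
Qed.

Lemma euler_factor_le_expR P : all prime P ->
  euler_factor P <= expR (- \sum_(p <- P) (p%:R : R)^-1).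
Proof.
elim: P => [|p P IH] /=; first by rewrite /euler_factor !big_nil oppr0 expR0.
case/andP=> p_pr P_pr; have /andP[i0 i1] := prime_inv_itv p_pr.
have /andP[e0 _] := euler_factor_itv P_pr.
rewrite /euler_factor big_cons -/(euler_factor P) big_cons opprD expRD.
apply: ler_pM; rewrite ?subr_ge0 ?IH //.
exact: expR_ge1Dx.
Qed.

Lemma sieve_count_error P N : uniq P -> all prime P ->
  `|(sieve_count N P)%:R - N%:R * euler_factor P| <= (2 ^ size P)%:R - 1.
Proof.
elim: P N => [|p P IH] N /=.
  move=> _ _; rewrite /sieve_count /euler_factor big_nil count_predT size_iota.
  by rewrite mulr1 subrr normr0 subrr.
case/andP=> pNP P_uniq /andP[p_pr P_pr].
set q := (N %/ p)%N; set e := euler_factor P.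
have /andP[e0 e1] : 0 <= e <= 1 := euler_factor_itv P_pr.
have p_gt0 : 0 < (p%:R : R) by rewrite ltr0n prime_gt0.
set d : R := N%:R / p%:R - q%:R.
have /andP[d0 d1] : 0 <= d <= 1.
  have -> : d = (N %% p)%:R / p%:R.
    rewrite /d /q {1}(divn_eq N p) natrD natrM mulrDl mulfK ?gt_eqF //.
    by rewrite addrAC subrr add0r.
  rewrite divr_ge0 ?ler0n //= ler_pdivrMr // mul1r ler_nat.
  by rewrite ltnW // ltn_mod prime_gt0.
(* The error for [p :: P] is the error at [N] minus the error at [N %/ p],
   up to the rounding term [d * e] in [0, 1]. *)
have -> : (sieve_count N (p :: P))%:R - N%:R * euler_factor (p :: P)
    = ((sieve_count N P)%:R - N%:R * e) - ((sieve_count q P)%:R - q%:R * e)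
      + d * e.
  rewrite (sieve_count_cons N p_pr pNP P_pr) natrD /euler_factor big_cons.
  by rewrite -/(euler_factor P) -/e /d; ring.
move: (IH N P_uniq P_pr) (IH q P_uniq P_pr).
rewrite expnS natrM !ler_norml.
have /andP[de0 de1] : 0 <= d * e <= 1 by apply/andP; split; nra.
set a := (_ - N%:R * e); set b := (_ - q%:R * e).
by move=> /andP[? ?] /andP[? ?]; apply/andP; split; lra.
Qed.

End SieveError.

Section ReciprocalSum.
Variable R : realType.

(* [1/p <= 1/5] except at [p = 2, 3], where the excess is at most [3/10]. *)
Definition prime_inv_majorant (p : nat) : R :=
  5^-1 + 3 / 10 * ((p == 2)%:R + (p == 3)%:R).

Lemma prime_inv_le_majorant p : prime p -> (p%:R : R)^-1 <= prime_inv_majorant p.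
Proof.
move=> p_pr; rewrite /prime_inv_majorant.
case: (eqVneq p 2) => [->|p2]; first by rewrite /=; lra.
case: (eqVneq p 3) => [->|p3]; first by rewrite /=; lra.
have p5 : (5 <= p)%N by case: p p_pr p2 p3 => [|[|[|[|[|p]]]]].
rewrite /= !addr0 mulr0 addr0 lef_pV2 ?posrE ?ltr0n ?(leq_trans _ p5) //.
by rewrite (ler_nat R 5 p).
Qed.

Lemma sum_prime_inv_majorant s : \sum_(p <- s) prime_inv_majorant p =
  (size s)%:R / 5 + 3 / 10 * ((count_mem 2 s)%:R + (count_mem 3 s)%:R).
Proof.
elim: s => [|p s IH]; first by rewrite big_nil /=; lra.
rewrite big_cons IH /prime_inv_majorant /= !natrD -[(size s).+1]addn1 natrD.
by set a := (count_mem 2 s)%:R; set b := (count_mem 3 s)%:R; lra.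
Qed.

Lemma sum_prime_inv_le P : uniq P -> all prime P ->
  \sum_(p <- P) (p%:R : R)^-1 <= (size P)%:R / 5 + 3 / 5.
Proof.
move=> P_uniq /allP P_pr.
apply: (le_trans (y := \sum_(p <- P) prime_inv_majorant p)).
  rewrite big_seq [leRHS]big_seq; apply: ler_sum => p /P_pr.
  exact: prime_inv_le_majorant.
rewrite sum_prime_inv_majorant !count_uniq_mem //.
by case: (2 \in P); case: (3 \in P); rewrite /=; lra.
Qed.

End ReciprocalSum.

Lemma two_le_expR (R : realType) : (2 : R) <= expR (3 / 4).
Proof.
have -> : (3 / 4 : R) = 8%:R * (3 / 32) by lra.
rewrite expRM_natl.
have := expR_ge1Dx (3 / 32 : R); set y := expR _ => y_ge.
have -> : y ^+ 8 = (y * y) * (y * y) * ((y * y) * (y * y)) by rewrite -!expr2 -!exprM.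
have y2 : 299 / 250 <= y * y by nra.
have y4 : 143 / 100 <= (y * y) * (y * y) by nra.
nra.
Qed.

Lemma size_uniq_bounded (R : realType) (y : R) (s : seq nat) : 0 <= y -> uniq s ->
  (forall n, n \in s -> n%:R < y) -> (size s)%:R <= y + 1.
Proof.
move=> y0 s_uniq s_lt.
have : (size s <= size (iota 0 (Num.truncn y).+1))%N.
  apply: uniq_leq_size => // n ns; rewrite mem_iota add0n ltnS.
  by rewrite truncn_ge_nat // ltW ?s_lt.
rewrite size_iota -(ler_nat R) => /le_trans; apply.
by rewrite -addn1 natrD lerD2r truncn_le.
Qed.

(* [2^k e^s <= e^(0.95 k + 0.6) <= e^(0.95 ln x + 1.55)], and the threshold on
   [ln x] makes [1.55 - 0.05 ln x <= ln eps]. *)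
Lemma sieve_remainder_small (R : realType) (eps x : R) (P : seq nat) :
  0 < eps -> 1 <= x -> 31 - 20 * ln eps <= ln x -> uniq P ->
  (forall p, p \in P -> prime p /\ (p%:R < ln x)) ->
  ((2 ^ size P)%:R : R) <= eps * x * expR (- \sum_(p <- P) (p%:R)^-1).
Proof.
move=> eps0 x1 lnx P_uniq P_small; have x0 : 0 < x by lra.
have P_pr : all prime P by apply/allP => p /P_small [].
set k := size P; set s := \sum_(p <- P) _.
have hk : k%:R <= ln x + 1.
  apply: size_uniq_bounded => // [|p /P_small[] //].
  exact: ln_ge0.
have hs : s <= k%:R / 5 + 3 / 5 by apply: sum_prime_inv_le.
have two_pow : (2 ^ k)%:R <= expR (k%:R * (3 / 4) : R).
  rewrite natrX expRM_natl lerXn2r ?nnegrE ?expR_ge0 //.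
  exact: two_le_expR.
rewrite expRN ler_pdivlMr ?expR_gt0 //; apply: (le_trans (ler_wpM2r _ two_pow)).
  exact: expR_ge0.
rewrite -expRD -[eps * x]lnK ?posrE ?mulr_gt0 // lnM ?posrE // ler_expR.
lra.
Qed.

Theorem corollary3p8 (R : realType) :
  forall eps : R, 0 < eps ->
  exists X : R, forall x : R, X <= x ->
  forall P : seq nat, uniq P ->
    (forall p, p \in P -> prime p /\ (p%:R < ln x)) ->
    (S_count x P)%:R <= (1 + eps) * x * expR (- \sum_(p <- P) (p%:R)^-1).
Proof.
move=> eps eps0; set M := Num.max 1 (31 - 20 * ln eps).
exists (expR M) => x Xx P P_uniq P_small.
have [M1 M_lnx] : 1 <= M /\ 31 - 20 * ln eps <= M by rewrite !le_max !lexx orbT.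
have x1 : 1 <= x by apply: le_trans Xx; rewrite -expR0 ler_expR; lra.
have lnx : 31 - 20 * ln eps <= ln x.
  by apply: (le_trans M_lnx); rewrite -ler_expR lnK // posrE; lra.
have P_pr : all prime P by apply/allP => p /P_small [].
have remainder := sieve_remainder_small eps0 x1 lnx P_uniq P_small.
have := sieve_count_error R (Num.truncn x) P_uniq P_pr.
rewrite S_countE ler_norml => /andP[_ error].
have main_term : (Num.truncn x)%:R * euler_factor R P
    <= x * expR (- \sum_(p <- P) (p%:R)^-1).
  have /andP[e0 _] := euler_factor_itv R P_pr.
  by rewrite ler_pM ?euler_factor_le_expR // truncn_le; lra.
nra.
Qed.
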